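(* Assume Assumptions A.1–A.6. Suppose $q:\Theta\to\mathbb{R}$ is bounded on $\Theta$ and continuous on $\Theta_{\#\#}$. Then for each $t\ge1$, the function $\theta\mapsto E(q(\theta_t^* )\mid\theta_0^*=\theta)$ is continuous on $\Theta_{\#\#}$.
   Context: Model: $\xi_t=a(X_{t-1})+b(X_{t-1})e_t$ with $X_t=(\xi_t,\dots,\xi_{t-p+1})\in\mathbb{R}^p$, $\{e_t\}$ i.i.d. $\|\cdot\|$ Euclidean, $\Theta=\{\theta:\|\theta\|=1\}$, $\mathbb{R}^p_0=\mathbb{R}^p\setminus\{0\}$, $H_0=\{x:\min_i|x_i|=0\}$, $\Theta_\#=\Theta\setminus H_0$. A.1: $e_t$ has Lebesgue density $f$ locally bounded away from $0$; $b$ positive, locally bounded, locally bounded away from $0$. A.2: $\sup_u(1+|u|)f(u)<\infty$, $E|e_1|^{r_0}<\infty$ for some $r_0>0$. A.3: $a(x)/(1+\|x\|)$, $b(x)/(1+\|x\|)$ bounded. A.4: bounded $a_*,b_*$ on $\Theta$ with $\sup_{\theta}|a(w\theta)/w-a_*(\theta)|\to0$, $\sup_\theta|b(w\theta)/w-b_*(\theta)|\to0$ as $w\to\infty$; $a^*(x)=a_*(x/\|x\|)\|x\|$, $b^*(x)=b_*(x/\|x\|)\|x\|$, $a^*(0)=b^*(0)=0$. A.5: if $p>1$, $\max(|a^*|,b^* )$ locally bounded away from $0$ on $\mathbb{R}^p_0$ and $b^*$ locally bounded away from $0$ on $\mathbb{R}^p\setminus H_0$. A.6: if $p>1$, there are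 $(p-1)$-dimensional hyperplanes $H_1,\dots,H_m$ through the origin with $a^*,b^*$ continuous off $\bigcup_jH_j$. $F\theta=(\theta_2,\dots,\theta_p,\theta_1)$; $\Theta_{\#\#}=\{\theta\in\Theta_\#:F^k\theta\notin H_j\ \forall j,k\}$. $z(x,u)=a^*(x)+b^*(x)u$, $w(x,u)=\|(z(x,u),x_1,\dots,x_{p-1})\|$; collapsed chain $\theta_t^*=(z(\theta^*_{t-1},e_t),\theta^*_{t-1,1},\dots,\theta^*_{t-1,p-1})/w(\theta^*_{t-1},e_t)$. *)

From mathcomp Require Import all_boot all_order all_algebra.
From mathcomp Require Import all_classical all_reals all_analysis.
Set Implicit Arguments. Unset Strict Implicit. Unset Printing Implicit Defensive.
Import Order.TTheory GRing.Theory Num.Theory.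
Import numFieldNormedType.Exports.
Local Open Scope classical_set_scope.
Local Open Scope ring_scope.

Section Defs.
Variables (R : realType) (p : nat).
Notation vec := 'rV[R]_p.

(* Euclidean norm on R^p (the library's norm on 'rV is the max norm) *)
Definition enorm (x : vec) : R := Num.sqrt (\sum_i x ord0 i ^+ 2).

Definition Theta : set vec := [set x | enorm x = 1].
Definition H0 : set vec := [set x | exists i, x ord0 i = 0].
Definition Theta_sharp : set vec := Theta `\` H0.

Definition Fshift (x : vec) : vec := \row_i x ord0 (ordS i).

Definition hyperplane (nv : vec) : set vec :=
  [set x | \sum_i nv ord0 i * x ord0 i = 0].

Definition Theta_ss (m : nat) (nrm : 'I_m -> vec) : set vec :=
  [set th | Theta_sharp th /\
     forall (j : 'I_m) (k : nat), ~ hyperplane (nrm j) (iter k Fshift th)].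

Definition homog_ext (g : vec -> R) (x : vec) : R :=
  if x == 0 then 0 else g ((enorm x)^-1 *: x) * enorm x.

Definition zfun (ast bst : vec -> R) (x : vec) (u : R) : R :=
  ast x + bst x * u.

Definition newvec (ast bst : vec -> R) (x : vec) (u : R) : vec :=
  \row_i (if val i == 0%N then zfun ast bst x u else x ord0 (ord_pred i)).

Definition wfun ast bst x u : R := enorm (newvec ast bst x u).

(* one step of the collapsed chain: theta_t = Phi(theta_{t-1}, e_t) *)
Definition Phi ast bst x u : vec := (wfun ast bst x u)^-1 *: newvec ast bst x u.

(* transition operator of the collapsed chain, e_t having Lebesgue density f:
   (K g)(theta) = E g(Phi(theta, e_1)) = \int g(Phi(theta,u)) f(u) du *)
Definition Kop ast bst (f : R -> R) (g : vec -> R) (th : vec) : R :=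
  Rintegral lebesgue_measure setT (fun u => g (Phi ast bst th u) * f u).

(* E[ q(theta*_t) | theta*_0 = theta ] = (K^t q)(theta) *)
Definition condexp ast bst f (t : nat) (q : vec -> R) (th : vec) : R :=
  iter t (Kop ast bst f) q th.

Definition borel_meas (g : vec -> R) : Prop :=
  forall B : set R, measurable B -> <<s open >> (g @^-1` B).

Definition locally_bounded (g : vec -> R) : Prop :=
  forall x : vec, exists M : R, \forall y \near x, `|g y| <= M.

Definition loc_bdd_away0 (S : set vec) (g : vec -> R) : Prop :=
  forall x : vec, S x -> exists2 c : R, 0 < c & \forall y \near x, S y -> c <= `|g y|.

End Defs.

(* For theta in Theta_##, the one-step map u |-> Phi(theta, u) of the collapsed chain
   leaves Theta_## only for countably many shocks u.  Indeed the new coordinate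
   z = a^*(theta) + b^*(theta) u is an injective affine function of u, the only new
   coordinate that can vanish is z, and every shift F^k Phi(theta, u) is proportional to
   F^(k+p-1) theta + (z - theta_p) F^k e_1 with F^(k+p-1) theta off H_j, so it meets H_j for
   at most one value of z.  Consequently, if g is bounded and continuous on Theta_## and
   theta_k -> theta in Theta_##, then g(Phi(theta_k, u)) -> g(Phi(theta, u)) for almost
   every u, and dominated convergence shows that theta |-> E g(Phi(theta, e_1)) is again
   continuous on Theta_##, with the same bound.  When p = 1,
   Theta_## is discrete and there is nothing to prove. *)

From mathcomp Require Import all_boot all_order all_algebra.
From mathcomp Require Import all_classical all_reals all_analysis.
From mathcomp Require Import measurable_realfun lra.
Import Order.TTheory GRing.Theory Num.Theory.
Import numFieldNormedType.Exports.
Local Open Scope classical_set_scope.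
Local Open Scope ring_scope.
Set Implicit Arguments. Unset Strict Implicit. Unset Printing Implicit Defensive.

Lemma addr_mul_eq0 (K : fieldType) (c d t : K) : c != 0 -> c + t * d = 0 -> t = - c / d.
Proof.
move=> c0 ctd; have d0 : d != 0 by apply: contraNneq c0 => d0; rewrite -ctd d0 mulr0 addr0.
by rewrite -[t](mulfK d0) -[t * d](addKr c) ctd addr0 mulNr.
Qed.

Section EuclideanNorm.
Variables (R : realType) (p : nat).
Implicit Types x : 'rV[R]_p.

Lemma enorm_ge0 x : 0 <= enorm x.
Proof. exact: sqrtr_ge0. Qed.

Lemma ler_coord_enorm x i : `|x ord0 i| <= enorm x.
Proof.
rewrite /enorm -sqrtr_sqr ler_wsqrtr // (bigD1 i) //= lerDl.
by apply: sumr_ge0 => j _; exact: sqr_ge0.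
Qed.

Lemma enorm_gt0 x i : x ord0 i != 0 -> 0 < enorm x.
Proof. by move=> xi; apply: lt_le_trans (ler_coord_enorm x i); rewrite normr_gt0. Qed.

Lemma enormZ (s : R) x : enorm (s *: x) = `|s| * enorm x.
Proof.
rewrite /enorm -sqrtr_sqr -sqrtrM ?sqr_ge0 // mulr_sumr.
by congr Num.sqrt; apply: eq_bigr => i _; rewrite mxE exprMn.
Qed.

Lemma enorm_normalize x : enorm x != 0 -> enorm ((enorm x)^-1 *: x) = 1.
Proof. by move=> x0; rewrite enormZ ger0_norm ?invr_ge0 ?enorm_ge0 ?mulVf. Qed.

End EuclideanNorm.

Section Shift.
Variables (R : realType) (n : nat).
Local Notation vec := 'rV[R]_n.+1.
Local Notation F := (@Fshift R n.+1).
Implicit Types x y : vec.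

Lemma iter_FshiftE k x i :
  iter k F x ord0 i = x ord0 (inord ((i + k) %% n.+1)).
Proof.
elim: k i => [|k IH] i /=; first by rewrite addn0 modn_small // inord_val.
by rewrite /Fshift mxE IH /= modnDml addSnnS.
Qed.

Lemma iter_FshiftD k x y :
  iter k F (x + y) = iter k F x + iter k F y.
Proof. by apply/rowP => i; rewrite !mxE !iter_FshiftE !mxE. Qed.

Lemma iter_FshiftZ k (s : R) x :
  iter k F (s *: x) = s *: iter k F x.
Proof. by apply/rowP => i; rewrite !mxE !iter_FshiftE !mxE. Qed.

Variables ast bst : vec -> R.

(* The new coordinate is prepended to the right cyclic shift [F^n x] of [x],
   whose first entry is the dropped [x_p]. *)
Lemma newvec_shift x u : newvec ast bst x u =
  iter n F x + (zfun ast bst x u - x ord0 ord_max) *: delta_mx 0 0.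
Proof.
apply/rowP => j; rewrite !mxE iter_FshiftE.
case: (unliftP 0 j) => [j'|] -> /=.
  rewrite mulr0 addr0; congr (x ord0 _); apply: val_inj.
  by rewrite /= inordK ?ltn_pmod // /bump /= add1n addSnnS modnDr.
rewrite add0n modn_small //.
have -> : inord n = ord_max :> 'I_n.+1 by apply: val_inj; rewrite /= inordK.
by rewrite mulr1 addrC subrK.
Qed.

End Shift.

Section LeavingThetass.
Variables (R : realType) (n : nat).
Local Notation vec := 'rV[R]_n.+1.
Local Notation F := (@Fshift R n.+1).
Variables (ast bst : vec -> R) (m : nat) (nrm : 'I_m -> vec).
Local Notation S := (Theta_ss nrm).
Local Notation newvec := (newvec ast bst).
Local Notation zfun := (zfun ast bst).
Local Notation wfun := (wfun ast bst).
Local Notation Phi := (Phi ast bst).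
Hypothesis n_gt0 : (0 < n)%N.
Implicit Types x y : vec.

Lemma Theta_ss_notH0 x : S x -> ~ H0 x.
Proof. by case=> -[]. Qed.

Lemma newvec_lift x u (j : 'I_n) : newvec x u ord0 (lift 0 j) = x ord0 (inord j).
Proof.
rewrite mxE /=; congr (x ord0 _); apply: val_inj.
by rewrite /= inordK ?(ltn_trans (ltn_ord j)) // add0n modnDr modn_small // ltnS ltnW.
Qed.

Lemma wfun_neq0 x u : ~ H0 x -> wfun x u != 0.
Proof.
move=> x0; apply/lt0r_neq0/(@enorm_gt0 _ _ _ (lift 0 (Ordinal n_gt0))).
by rewrite newvec_lift; apply/eqP => xj; apply: x0; exists (inord 0).
Qed.

Lemma Phi_Theta x u : ~ H0 x -> Theta (Phi x u).
Proof. by move=> x0; apply: enorm_normalize; exact: wfun_neq0. Qed.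

Lemma Phi_notH0 x u : ~ H0 x -> zfun x u != 0 -> ~ H0 (Phi x u).
Proof.
move=> x0 z0 [i]; rewrite mxE => /eqP; rewrite mulf_eq0 invr_eq0.
rewrite (negbTE (wfun_neq0 u x0)) /=; case: (unliftP 0 i) => [j|] ->.
  by rewrite newvec_lift => /eqP xj; apply: x0; exists (inord j).
by rewrite mxE /= (negbTE z0).
Qed.

Lemma hyperplaneZ (nv : vec) (s : R) y :
  s != 0 -> hyperplane nv (s *: y) -> hyperplane nv y.
Proof.
move=> s0; rewrite /hyperplane /=.
under eq_bigr do rewrite mxE mulrCA.
by rewrite -mulr_sumr => /eqP; rewrite mulf_eq0 (negbTE s0) => /eqP.
Qed.

Lemma hyperplane_iter_Phi x u (nv : vec) k : ~ H0 x ->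
  hyperplane nv (iter k F (Phi x u)) ->
  \sum_i nv ord0 i * iter (k + n) F x ord0 i +
  (zfun x u - x ord0 ord_max) * \sum_i nv ord0 i * iter k F (delta_mx 0 0) ord0 i = 0.
Proof.
move=> x0; rewrite /Phi iter_FshiftZ => /(hyperplaneZ (invr_neq0 (wfun_neq0 u x0))).
rewrite /hyperplane /= newvec_shift iter_FshiftD iter_FshiftZ -iterD.
under eq_bigr do rewrite !mxE mulrDr mulrCA.
by rewrite big_split /= -mulr_sumr.
Qed.

Definition exit_root x j k : R :=
  x ord0 ord_max - (\sum_i nrm j ord0 i * iter (k + n) F x ord0 i) /
                   \sum_i nrm j ord0 i * iter k F (delta_mx 0 0) ord0 i.

Lemma Phi_Theta_ss x u : S x -> zfun x u != 0 ->
  (forall j k, zfun x u != exit_root x j k) -> S (Phi x u).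
Proof.
move=> [[_ x0] xS] z0 zroot; split; first by split; [exact: Phi_Theta|exact: Phi_notH0].
move=> j k /(hyperplane_iter_Phi x0) /addr_mul_eq0 root.
have /eqP[] := zroot j k; rewrite /exit_root -mulNr -root; first by rewrite addrC subrK.
by apply/eqP; exact: xS j (k + n)%N.
Qed.

Lemma countable_exit_Theta_ss x : S x -> bst x != 0 ->
  countable [set u | ~ S (Phi x u)].
Proof.
move=> xS b0.
pose root (o : option ('I_m * nat)) := if o is Some jk then exit_root x jk.1 jk.2 else 0.
have uE u : u = (zfun x u - ast x) / bst x by rewrite /zfun addrC addKr mulrC mulKf.
apply: (@sub_countable _ _ _ (range (fun o => (root o - ast x) / bst x))); last first.
  exact: sub_countable (card_image_le _ _) (countableP _).
apply: subset_card_le => u /= uS.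
have [z0|z0] := eqVneq (zfun x u) 0; first by exists None => //; rewrite /= -z0 -uE.
suff [[j k] zjk] : exists jk : 'I_m * nat, zfun x u = exit_root x jk.1 jk.2.
  by exists (Some (j, k)) => //; rewrite /= -zjk -uE.
apply: contrapT => noroot; apply: uS; apply: Phi_Theta_ss => // j k.
by apply/eqP => zjk; apply: noroot; exists (j, k).
Qed.

End LeavingThetass.

Lemma cvg_mxP (R : realType) (k l : nat) {T} (F : set_system T) {FF : Filter F}
    (X : T -> 'M[R]_(k, l)) (L : 'M[R]_(k, l)) :
  X t @[t --> F] --> L <-> forall i j, X t i j @[t --> F] --> L i j.
Proof.
split=> [XL i j|XL]; first exact: (continuous_cvg _ (@coord_continuous R k l i j L) XL).
apply/cvgrPdist_lt => e e0.
have := @filter_forall T _ (fun ij t => `|L ij.1 ij.2 - X t ij.1 ij.2| < e) F FF.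
move=> /(_ (fun ij => (cvgrPdist_lt _ _).1 (XL ij.1 ij.2) e e0)); apply: filterS => t Xt.
rewrite /Num.Def.normr /= mx_normrE; elim/big_ind: _ => //.
  by move=> x y xe ye; rewrite gt_max xe ye.
by move=> ij _; rewrite !mxE; exact: Xt.
Qed.

Lemma enorm_continuous (R : realType) (p : nat) : continuous (@enorm R p).
Proof.
move=> x; apply: (@continuous_comp _ _ _ _ Num.sqrt); last exact: sqrt_continuous.
apply: continuous_big => [|i _]; first exact: add_continuous.
by move=> y; apply: continuousM; exact: coord_continuous.
Qed.

Lemma cvg_to_within {T : Type} {U : topologicalType} (F : set_system T) {FF : Filter F}
    (A : set U) (v : T -> U) (y : U) :
  (\forall t \near F, A (v t)) -> v t @[t --> F] --> y ->
  v t @[t --> F] --> within A (nbhs y).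
Proof. by move=> Av vy P /= /vy; apply: filterS2 Av => t At; exact. Qed.

Section PhiContinuity.
Variables (R : realType) (n : nat).
Local Notation vec := 'rV[R]_n.+1.
Variables (ast bst : vec -> R).

Lemma cvg_Phi {T} (F : set_system T) {FF : Filter F} (X : T -> vec) (U : T -> R) x u :
  X t @[t --> F] --> x ->
  zfun ast bst (X t) (U t) @[t --> F] --> zfun ast bst x u ->
  wfun ast bst x u != 0 ->
  Phi ast bst (X t) (U t) @[t --> F] --> Phi ast bst x u.
Proof.
move=> Xx zX w0.
have newX : newvec ast bst (X t) (U t) @[t --> F] --> newvec ast bst x u.
  apply/cvg_mxP => i j; rewrite !mxE; under eq_cvg do rewrite mxE.
  by case: ifP => _ //; move/cvg_mxP: Xx; apply.
apply: (cvgZ _ newX); apply: cvgV w0 _.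
by have := continuous_cvg _ (@enorm_continuous R n.+1 _) newX; apply.
Qed.

End PhiContinuity.

Lemma cvg_within_seq (R : realType) (V : normedModType R) (f : V -> R) (A : set V) (x : V) :
  (forall u : nat -> V, (forall k, A (u k)) -> u k @[k --> \oo] --> x ->
     f (u k) @[k --> \oo] --> f x) ->
  f y @[y --> within A (nbhs x)] --> f x.
Proof.
move=> H; apply/cvgrPdist_lt => e e0; apply: contrapT => fxe.
have far k : exists y, A y /\ `|x - y| < k.+1%:R^-1 /\ e <= `|f x - f y|.
  apply: contrapT => nok; apply: fxe.
  apply/nbhs_ballP; exists k.+1%:R^-1 => //= y; rewrite -ball_normE /= => xy Ay.
  by rewrite ltNge; apply/negP => fy; apply: nok; exists y.
have [u uP] := choice far.
have ux : u k @[k --> \oo] --> x.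
  apply/cvgrPdist_lt => r r0; near=> k; apply: lt_trans (uP k).2.1 _.
  by near: k; exact: (@near_infty_natSinv_lt _ (PosNum r0)).
have /cvgrPdist_lt /(_ e e0) [N _ fuN] := H u (fun k => (uP k).1) ux.
by have := fuN N (leqnn N); rewrite ltNge (uP N).2.2.
Unshelve. all: by end_near.
Qed.

Lemma measurable_fun_off_countable (R : realType) (r : R -> R) (C : set R) :
  countable C -> {within ~` C, continuous r} -> measurable_fun setT r.
Proof.
move=> cC rC _ B mB; rewrite setTI.
have mC : measurable C by apply: countable_measurable => // t; exact: measurable_set1.
have -> : r @^-1` B = (~` C `&` r @^-1` B) `|` (C `&` r @^-1` B).
  apply/seteqP; split=> [x Bx|x [] []//].
  by have [Cx|Cx] := pselect (C x); [right|left].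
have rm := subspace_continuous_measurable_fun (measurableC mC) rC.
apply: measurableU; first exact: (rm (measurableC mC) B mB).
apply: countable_measurable; first by move=> t; exact: measurable_set1.
exact: sub_countable (subset_card_le (@subIsetl _ _ _)) cC.
Qed.

Section TransitionOperator.
Variables (R : realType) (n : nat).
Local Notation vec := 'rV[R]_n.+1.
Variables (ast bst : vec -> R) (m : nat) (nrm : 'I_m -> vec).
Local Notation S := (Theta_ss nrm).
Local Notation Phi := (Phi ast bst).
Hypothesis n_gt0 : (0 < n)%N.
Hypothesis ab_cont : forall x, S x -> {for x, continuous ast} /\ {for x, continuous bst}.
Hypothesis b_neq0 : forall x, S x -> bst x != 0.

Lemma cvg_comp_Phi (g : vec -> R) {T} (F : set_system T) {FF : Filter F}
    (X : T -> vec) (U : T -> R) x u :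
  {within S, continuous g} -> S x -> S (Phi x u) ->
  X t @[t --> F] --> x -> U t @[t --> F] --> u ->
  (\forall t \near F, S (Phi (X t) (U t))) ->
  g (Phi (X t) (U t)) @[t --> F] --> g (Phi x u).
Proof.
move=> gS Sx SPhi Xx Uu FS; have [ac bc] := ab_cont Sx.
have PhiS : Phi (X t) (U t) @[t --> F] --> within S (nbhs (Phi x u)).
  apply: cvg_to_within FS _; apply: (cvg_Phi Xx _ (wfun_neq0 _ _ n_gt0 u (Theta_ss_notH0 Sx))).
  apply: cvgD; first exact: (continuous_cvg _ ac Xx).
  by apply: (cvgM _ Uu); exact: (continuous_cvg _ bc Xx).
exact: cvg_trans (cvg_app g PhiS) ((subspace_continuousP _ _).1 gS _ SPhi).
Qed.

Lemma countable_exit x : S x -> countable [set u | ~ S (Phi x u)].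
Proof. by move=> Sx; exact: (countable_exit_Theta_ss ast n_gt0 Sx (b_neq0 Sx)). Qed.

Lemma measurable_fun_comp_Phi (g : vec -> R) x : {within S, continuous g} -> S x ->
  measurable_fun setT (fun u => g (Phi x u)).
Proof.
move=> gS Sx; apply: measurable_fun_off_countable (countable_exit Sx) _.
apply/subspace_continuousP => u0 /contrapT SPhi.
apply: cvg_comp_Phi => //; [exact: cvg_cst|exact: cvg_within|].
by apply: filterS (withinT _ _) => u /contrapT.
Qed.

Variable f : R -> R.
Hypothesis mf : measurable_fun setT f.
Hypothesis f_ge0 : forall u, 0 <= f u.
Hypothesis f_int1 : (\int[lebesgue_measure]_u (f u)%:E = 1)%E.

Lemma integrable_density : lebesgue_measure.-integrable setT (EFin \o f).
Proof.
apply/integrableP; split; first exact/measurable_EFinP.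
suff -> : (\int[lebesgue_measure]_u `|(EFin \o f) u| = \int[lebesgue_measure]_u (f u)%:E)%E.
  by rewrite f_int1 ltry.
by apply: eq_integral => u _; rewrite /comp abse_EFin ger0_norm.
Qed.

Lemma integrable_scaled_density r :
  lebesgue_measure.-integrable setT (EFin \o (fun u => r * f u)).
Proof.
have := integrableZl measurableT r integrable_density.
by congr (_.-integrable _ _); apply: funext => u; rewrite /= EFinM.
Qed.

Lemma Rintegral_scaled_density r : Rintegral lebesgue_measure setT (fun u => r * f u) = r.
Proof. by rewrite RintegralZl ?integrable_density // /Rintegral f_int1 mulr1. Qed.

Lemma measurable_Kop_integrand (g : vec -> R) x : {within S, continuous g} -> S x ->
  measurable_fun setT (EFin \o (fun u => g (Phi x u) * f u)).
Proof.
move=> gS Sx; apply/measurable_EFinP/measurable_funM => //.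
exact: measurable_fun_comp_Phi.
Qed.

Section BoundedIntegrand.
Variables (g : vec -> R) (M : R).
Hypothesis g_le : forall y, `|g y| <= M.
Hypothesis gS : {within S, continuous g}.

Let integrand x u := g (Phi x u) * f u.

Let le_integrand x u : `|integrand x u| <= M * f u.
Proof. by rewrite normrM (ger0_norm (f_ge0 u)) ler_wpM2r. Qed.

Let integrable_integrand x : S x -> lebesgue_measure.-integrable setT (EFin \o integrand x).
Proof.
move=> Sx; apply: le_integrable (integrable_scaled_density M) => //.
  exact: measurable_Kop_integrand.
by move=> u _; rewrite /comp !abse_EFin lee_fin (le_trans (le_integrand x u)) ?ler_norm.
Qed.

Lemma Kop_le x : S x -> `|Kop ast bst f g x| <= M.
Proof.
move=> Sx; apply: le_trans (le_normr_Rintegral _ (integrable_integrand Sx)) _ => //.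
rewrite -[leRHS]Rintegral_scaled_density; apply: le_Rintegral => //.
  by apply: integrable_norm => //; exact: integrable_integrand.
exact: integrable_scaled_density.
Qed.

(* All the integrands [integrand (u k)] and [integrand x] are continuous
   outside one countable, hence Lebesgue-null, set of shocks. *)
Lemma Kop_continuous : {within S, continuous (Kop ast bst f g)}.
Proof.
apply/subspace_continuousP => x Sx; apply: cvg_within_seq => u Su ux.
pose N := \bigcup_(o in [set: option nat])
  [set v | ~ S (Phi (if o is Some k then u k else x) v)].
have cN : countable N.
  apply: bigcup_countable; first exact: countableP.
  by move=> [k|] _; [exact: countable_exit (Su k)|exact: countable_exit Sx].
have mN : measurable N.
  by apply: countable_measurable cN => t; exact: measurable_set1.
have integrand_cvg : {ae lebesgue_measure, forall v, setT v ->
    (fun k => (integrand (u k) v)%:E) @ \oo --> (integrand x v)%:E}.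
  exists N; split => //; first exact: countable_lebesgue_measure0.
  move=> v /= notcvg; apply: contrapT => Nv; apply: notcvg => _.
  apply: cvg_EFin; first exact: nearW.
  apply: (cvgM _ (cvg_cst _)); apply: cvg_comp_Phi ux (cvg_cst _) _ => //.
  - by apply: contrapT => nS; apply: Nv; exists None.
  - by apply: nearW => k; apply: contrapT => nS; apply: Nv; exists (Some k).
have integrand_le : {ae lebesgue_measure, forall v k, setT v ->
    (`|(integrand (u k) v)%:E| <= M%:E * (f v)%:E)%E}.
  by apply: aeW => v k _; rewrite abse_EFin -EFinM lee_fin.
have [_ _ int_cvg] := @dominated_convergence _ _ R lebesgue_measure setT measurableT
  (fun k => EFin \o integrand (u k)) (EFin \o integrand x) (fun v => M%:E * (f v)%:E)%E
  (fun k => measurable_Kop_integrand gS (Su k)) (measurable_Kop_integrand gS Sx) integrand_cvg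
  (integrableZl measurableT M integrable_density) integrand_le.
have Kx_fin := integrable_fin_num measurableT (integrable_integrand Sx).
by apply: fine_cvg; rewrite fineK.
Qed.

End BoundedIntegrand.

Local Notation patchS g := (patch (fun=> 0) S g).

Lemma patch_Theta_ss_continuous (g : vec -> R) :
  {within S, continuous g} -> {within S, continuous (patchS g)}.
Proof.
move=> gS; apply: subspace_eq_continuous gS => y Sy.
by rewrite /from_subspace patchT.
Qed.

(* [Phi x u] stays in [S] for almost every [u], so only the values of [g] on [S]
   matter. *)
Lemma Kop_patch (g : vec -> R) x : {within S, continuous g} -> S x ->
  Kop ast bst f g x = Kop ast bst f (patchS g) x.
Proof.
move=> gS Sx; rewrite /Kop /Rintegral; congr fine.
apply: ae_eq_integral => //; first exact: measurable_Kop_integrand gS Sx.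
  exact: measurable_Kop_integrand (patch_Theta_ss_continuous gS) Sx.
have cE := countable_exit Sx.
exists [set u | ~ S (Phi x u)]; split.
- by apply: countable_measurable cE => t; exact: measurable_set1.
- exact: countable_lebesgue_measure0.
by move=> u /= noteq SPhi; apply: noteq => _; rewrite patchT //; exact: mem_set.
Qed.

(* Extending [g] by [0] off [S] provides the global bound used above. *)
Lemma Kop_bounded_continuous (g : vec -> R) (M : R) :
  (forall x, S x -> `|g x| <= M) -> {within S, continuous g} ->
  (forall x, S x -> `|Kop ast bst f g x| <= M) /\
  {within S, continuous (Kop ast bst f g)}.
Proof.
move=> gM gS; have gpS := patch_Theta_ss_continuous gS.
have gp_le y : `|patchS g y| <= Num.max M 0.
  rewrite /patch; case: ifPn => [/set_mem Sy|_]; last by rewrite normr0 le_max lexx orbT.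
  by rewrite le_max gM.
split=> [x Sx|].
  have M0 : 0 <= M by apply: le_trans (gM x Sx).
  by rewrite (Kop_patch gS Sx); apply: Kop_le gpS _ Sx; rewrite -(max_idPl M0).
apply: subspace_eq_continuous (Kop_continuous gp_le gpS) => y /set_mem Sy.
by rewrite /from_subspace (Kop_patch gS Sy).
Qed.

End TransitionOperator.

Lemma loc_bdd_away0_neq0 (R : realType) (p : nat) (A : set 'rV[R]_p) (g : 'rV[R]_p -> R) x :
  loc_bdd_away0 A g -> A x -> g x != 0.
Proof.
move=> gA Ax; have [c c0 /nbhs_singleton /(_ Ax)] := gA x Ax.
by apply: contraTneq => ->; rewrite normr0 -ltNge.
Qed.

Lemma eq_of_norm1 (R : realType) (a b : R) : `|a| = 1 -> `|b| = 1 -> `|a - b| < 1 -> a = b.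
Proof.
have [a0|a0] := leP 0 a; have [b0|b0] := leP 0 b;
  rewrite ?(ger0_norm a0) ?(ltr0_norm a0) ?(ger0_norm b0) ?(ltr0_norm b0);
  rewrite ltr_norml => ha hb /andP[]; lra.
Qed.

Lemma enorm_rV1 (R : realType) (y : 'rV[R]_1) : enorm y = `|y ord0 ord0|.
Proof. by rewrite /enorm big_ord1 sqrtr_sqr. Qed.

(* In dimension one, [Theta] is the discrete set [{-1, 1}]. *)
Lemma continuous_within_Theta_ss_dim1 (R : realType) (m : nat)
    (nrm : 'I_m -> 'rV[R]_1) (h : 'rV[R]_1 -> R) :
  {within Theta_ss nrm, continuous h}.
Proof.
apply/subspace_continuousP => x [[x1 _] _].
have x0y0 := (cvgrPdist_lt _ _).1 (@coord_continuous R 1 1 ord0 ord0 x) 1 ltr01.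
have near_x : \forall y \near within (Theta_ss nrm) (nbhs x), y = x.
  near=> y; have [[y1 _] _] : Theta_ss nrm y by near: y; exact: withinT.
  apply/rowP => i; rewrite (ord1 i); apply/esym/eq_of_norm1; rewrite -?enorm_rV1 //.
  by near: y; apply: cvg_within; exact: x0y0.
apply/cvgrPdist_lt => e e0; near=> y.
by rewrite (near near_x y) // subrr normr0.
Unshelve. all: by end_near.
Qed.

Theorem lemma5p5 (R : realType) (p : nat)
  (a b : 'rV[R]_p -> R) (f : R -> R)
  (a_ b_ : 'rV[R]_p -> R)
  (m : nat) (nrm : 'I_m -> 'rV[R]_p)
  (q : 'rV[R]_p -> R) :
  (0 < p)%N ->
  (* the model: a, b Borel; e_t has Lebesgue density f *)
  borel_meas a -> borel_meas b ->
  measurable_fun setT f -> (forall u, 0 <= f u) ->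
  (\int[lebesgue_measure]_u (f u)%:E = 1)%E ->
  (* A.1 *)
  (forall x : R, exists2 c : R, 0 < c & \forall y \near x, c <= f y) ->
  (forall x, 0 < b x) -> locally_bounded b -> loc_bdd_away0 setT b ->
  (* A.2 *)
  (exists M : R, forall u, (1 + `|u|) * f u <= M) ->
  (exists2 r0 : R, 0 < r0 &
     (\int[lebesgue_measure]_u ((`|u| `^ r0) * f u)%:E < +oo)%E) ->
  (* A.3 *)
  (exists M : R, forall x, `|a x| <= M * (1 + enorm x)) ->
  (exists M : R, forall x, `|b x| <= M * (1 + enorm x)) ->
  (* A.4 *)
  (exists M : R, forall th, Theta th -> `|a_ th| <= M /\ `|b_ th| <= M) ->
  (forall eps : R, 0 < eps -> exists W : R, forall w : R, W < w ->
     forall th, Theta th ->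
       `|a (w *: th) / w - a_ th| < eps /\ `|b (w *: th) / w - b_ th| < eps) ->
  (* A.5 *)
  ((1 < p)%N ->
     loc_bdd_away0 [set x | x != 0]
       (fun x => Num.max `|homog_ext a_ x| (homog_ext b_ x)) /\
     loc_bdd_away0 (~` H0 (p:=p)) (homog_ext b_)) ->
  (* A.6 *)
  (forall j, nrm j != 0) ->
  ((1 < p)%N -> forall x, (forall j, ~ hyperplane (nrm j) x) ->
     {for x, continuous (homog_ext a_)} /\ {for x, continuous (homog_ext b_)}) ->
  (* hypotheses on q *)
  (exists M : R, forall th, Theta th -> `|q th| <= M) ->
  borel_meas q ->
  {within Theta_ss nrm, continuous q} ->
  forall t : nat, (1 <= t)%N ->
    {within Theta_ss nrm,
      continuous (condexp (homog_ext a_) (homog_ext b_) f t q)}.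
Proof.
destruct p as [|[|n]] => //; first by move=> *; exact: continuous_within_Theta_ss_dim1.
move=> _ _ _ mf f_ge0 f_int1 _ _ _ _ _ _ _ _ _ _ A5 _ A6 [M qM] _ qS t _.
have ab_cont x : Theta_ss nrm x ->
    {for x, continuous (homog_ext a_)} /\ {for x, continuous (homog_ext b_)}.
  by move=> Sx; apply: A6 => // j; exact: Sx.2 j 0%N.
have b_neq0 x : Theta_ss nrm x -> homog_ext b_ x != 0.
  by move=> [[_ x0] _]; apply: loc_bdd_away0_neq0 (A5 _).2 x0.
suff [] : (forall x, Theta_ss nrm x ->
    `|condexp (homog_ext a_) (homog_ext b_) f t q x| <= M) /\
  {within Theta_ss nrm, continuous (condexp (homog_ext a_) (homog_ext b_) f t q)} by [].
elim: t => [|t [IHle IHc]]; first by split=> // x [[x1 _] _]; exact: qM.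
exact: (Kop_bounded_continuous (ltn0Sn n) ab_cont b_neq0 mf f_ge0 f_int1 IHle IHc).
Qed.
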